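(* For a mixed graph $M_G$ the following are equivalent: (a) $\rho(M_G)<\sqrt2$; (b) $\rho(M_G)\le 1$; (c) every connected component of $M_G$ is an undirected edge, an arc, or an isolated vertex.
   Context: A mixed graph $M_G$ is obtained from a finite simple graph $G$ by orienting the edges of some subset of $E(G)$; its components are those of $G$ with the inherited orientations. With $\omega=\frac{1+\mathbf{i}\sqrt3}{2}$, $N(M_G)$ has $(u,v)$-entry $\omega$ if $\overrightarrow{uv}$ is an arc, $\bar\omega$ if $\overrightarrow{vu}$ is an arc, $1$ for an undirected edge, $0$ otherwise. The spectral radius $\rho(M_G)$ is the maximum absolute value of an eigenvalue of $N(M_G)$. *)

From HB Require Import structures.
From mathcomp Require Import all_boot all_order all_algebra all_field.
Set Implicit Arguments. Unset Strict Implicit. Unset Printing Implicit Defensive.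
Import Order.TTheory GRing.Theory Num.Theory.
Local Open Scope ring_scope.

(* A mixed graph on the vertex set 'I_n: an underlying finite simple graph
   [adj] (symmetric, irreflexive) together with a set of arcs [arc]
   orienting some of its edges (each oriented edge gets exactly one
   direction). *)
Definition mixed_graph (n : nat) (adj arc : rel 'I_n) : Prop :=
  [/\ symmetric adj, irreflexive adj,
      (forall u v, arc u v -> adj u v) &
      (forall u v, arc u v -> ~~ arc v u)].

Definition undirected_edge (n : nat) (adj arc : rel 'I_n) (u v : 'I_n) : bool :=
  [&& adj u v, ~~ arc u v & ~~ arc v u].

Definition omega : algC := (1 + 'i * sqrtC 3) / 2.

Definition mixed_matrix (n : nat) (adj arc : rel 'I_n) : 'M[algC]_n :=
  \matrix_(u, v)
    (if arc u v then omega
     else if arc v u then omega^*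
     else if adj u v then 1 else 0).

(* The eigenvalues (with multiplicity) of a square complex matrix:
   the roots of its characteristic polynomial. *)
Definition spectrum (n : nat) (A : 'M[algC]_n) : seq algC :=
  sval (closed_field_poly_normal (char_poly A)).

Definition spectral_radius (n : nat) (A : 'M[algC]_n) : algC :=
  \big[Num.max/0]_(z <- spectrum A) `|z|.

Definition component (n : nat) (adj : rel 'I_n) (u : 'I_n) : {set 'I_n} :=
  [set v | connect adj u v].

Definition components_trivial (n : nat) (adj arc : rel 'I_n) : Prop :=
  forall u : 'I_n,
    #|component adj u| = 1%N \/
    exists v w : 'I_n, component adj u = [set v; w] /\
      (undirected_edge adj arc v w \/ arc v w).

From HB Require Import structures.
From mathcomp Require Import all_boot all_order all_algebra all_field.
From mathcomp Require Import sesquilinear spectral ring.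
Set Implicit Arguments. Unset Strict Implicit. Unset Printing Implicit Defensive.
Import Order.TTheory GRing.Theory Num.Theory.
Local Open Scope ring_scope.
Local Open Scope sesquilinear_scope.

(* N = N(M_G) is Hermitian and |N u v| is 1 on edges and 0 elsewhere.  If
   every vertex has at most one neighbour, every row of N has absolute sum at
   most 1, which bounds every eigenvalue by 1.  If a vertex v has two
   neighbours, the v-th column of N has squared norm at least 2; writing the
   normal matrix N as P^* D P with P unitary and D diagonal, that squared norm
   (N^* N)_vv = sum_j |D_jj|^2 |P_jv|^2 is an average of the squared moduli of
   the eigenvalues, so rho^2 >= 2.  Finally, "every vertex has at most one
   neighbour" says exactly that each component is an isolated vertex, an edge
   or an arc. *)

Lemma le_bigmax_norm (R : numDomainType) (s : seq R) z :
  z \in s -> `|z| <= \big[Num.max/0]_(x <- s) `|x|.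
Proof.
elim: s => // a s IH; rewrite inE big_cons.
have max_real : \big[Num.max/0]_(x <- s) `|x| \is Num.real.
  by apply: bigmax_real => // x _; apply: normr_real.
rewrite comparable_le_max ?real_comparable ?normr_real //.
by case/orP => [/eqP-> | /IH->]; rewrite ?lexx ?orbT.
Qed.

Lemma mem_spectrum n (A : 'M[algC]_n) z : (z \in spectrum A) = eigenvalue A z.
Proof.
rewrite eigenvalue_root_char /spectrum; case: closed_field_poly_normal => r /= ->.
by rewrite (monicP (char_poly_monic A)) scale1r root_prod_XsubC.
Qed.

Lemma norm_eigenvalue_le_spectral_radius n (A : 'M[algC]_n) z :
  eigenvalue A z -> `|z| <= spectral_radius A.
Proof. by rewrite -mem_spectrum; apply: le_bigmax_norm. Qed.

Lemma spectral_radius_le n (A : 'M[algC]_n) (c : algC) : 0 <= c ->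
  (forall z, eigenvalue A z -> `|z| <= c) -> spectral_radius A <= c.
Proof.
move=> c_ge0 Ac; rewrite /spectral_radius big_seq.
by apply: bigmax_le => // z; rewrite mem_spectrum; apply: Ac.
Qed.

Lemma spectral_radius_ge0 n (A : 'M[algC]_n) : 0 <= spectral_radius A.
Proof.
rewrite /spectral_radius; elim/big_rec: _ => // z x _ x_ge0.
by rewrite comparable_le_max ?real_comparable ?ger0_real ?x_ge0 ?orbT.
Qed.

Lemma norm_eigenvalue_le_row_sums (R : numFieldType) n (A : 'M[R]_n) (c : R) z :
  (forall k, \sum_i `|A k i| <= c) -> eigenvalue A z -> `|z| <= c.
Proof.
move=> rowA /eigenvalueP [x xA x_neq0].
pose S := \sum_i `|x 0 i|.
have S_gt0 : 0 < S.
  rewrite lt_def sumr_ge0 // andbT; apply: contra x_neq0 => /eqP /psumr_eq0P x0.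
  by apply/eqP/rowP => i; apply/eqP; rewrite mxE -normr_eq0 x0.
rewrite -(ler_pM2r S_gt0) mulr_sumr.
have -> : \sum_i `|z| * `|x 0 i| = \sum_i `|(x *m A) 0 i|.
  by apply: eq_bigr => i _; rewrite xA mxE normrM.
apply: (@le_trans _ _ (\sum_i \sum_k `|x 0 k| * `|A k i|)).
  apply: ler_sum => i _; rewrite mxE; apply: (le_trans (ler_norm_sum _ _ _)).
  by apply: ler_sum => k _; rewrite normrM.
rewrite exchange_big /= [_ * S]mulrC mulr_suml; apply: ler_sum => k _.
by rewrite -mulr_sumr ler_wpM2l.
Qed.

Section NormalMatrix.
Variable C : numClosedFieldType.

Lemma mul_trmxC_diag m n (M : 'M[C]_(m, n)) j :
  (M^t* *m M) j j = \sum_i `|M i j| ^+ 2.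
Proof. by rewrite mxE; apply: eq_bigr => i _; rewrite !mxE normCK mulrC. Qed.

Lemma trmxC_mul m n p (A : 'M[C]_(m, n)) (B : 'M[C]_(n, p)) :
  (A *m B)^t* = B^t* *m A^t*.
Proof. by rewrite trmx_mul map_mxM. Qed.

Lemma spectral_diag_eigenvalue n (A : 'M[C]_n) j :
  A \is normalmx -> eigenvalue A (spectral_diag A 0 j).
Proof.
set P := spectralmx A; set d := spectral_diag A => /orthomx_spectralP A_def.
have P_unitary : P \is unitarymx := spectral_unitarymx A.
apply/eigenvalueP; exists (row j P).
  rewrite -row_mul {1}A_def !mulmxA mulmxV ?spectral_unit // mul1mx.
  by rewrite mul_diag_mx; apply/rowP => k; rewrite !mxE.
apply: contraTneq isT => Pj0.
have := congr1 (fun M => (M *m P^t*) 0 j) Pj0.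
by rewrite /= -row_mul (unitarymxP P_unitary) mul0mx !mxE eqxx => /eqP; rewrite oner_eq0.
Qed.

Lemma normalmx_col_norm2_le n (A : 'M[C]_n) (r : C) j :
  A \is normalmx -> (forall z, eigenvalue A z -> `|z| <= r) ->
  \sum_i `|A i j| ^+ 2 <= r ^+ 2.
Proof.
move=> A_normal Ar; have /orthomx_spectralP := A_normal.
set P := spectralmx A; set d := spectral_diag A => A_def.
have P_unitary : P \is unitarymx := spectral_unitarymx A.
have d_le k : `|d 0 k| <= r by apply/Ar/spectral_diag_eigenvalue.
pose Q := diag_mx d *m P.
have AtA : A^t* *m A = Q^t* *m Q.
  rewrite A_def invmx_unitary // -mulmxA trmxC_mul trmxCK.
  by rewrite !mulmxA mulmxtVK // -mulmxA.
have PtP : P^t* *m P = 1%:M by rewrite -[P^t*]mul1mx mulmxKtV.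
rewrite -mul_trmxC_diag AtA mul_trmxC_diag.
apply: (@le_trans _ _ (\sum_i r ^+ 2 * `|P i j| ^+ 2)).
  apply: ler_sum => i _; rewrite /Q mul_diag_mx mxE normrM exprMn.
  by rewrite ler_wpM2r ?exprn_ge0 // lerXn2r ?nnegrE // (le_trans _ (d_le i)).
by rewrite -mulr_sumr -mul_trmxC_diag PtP mxE eqxx mulr1.
Qed.

End NormalMatrix.

Lemma conj_omega : omega^* = (1 - 'i * sqrtC 3) / 2.
Proof.
rewrite /omega fmorph_div rmorphD rmorphM /= conjCi rmorph1 rmorph_nat.
by rewrite (conj_Creal (ger0_real _)) ?sqrtC_ge0 ?ler0n // mulNr.
Qed.

Lemma norm_omega : `|omega| = 1.
Proof.
apply/eqP; rewrite -sqrp_eq1 // normCK conj_omega /omega.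
have i2 : 'i * 'i = -1 :> algC by rewrite -expr2 sqrCi.
have s3 : sqrtC 3 * sqrtC 3 = 3 :> algC by rewrite -expr2 sqrtCK.
have -> : (1 + 'i * sqrtC 3) / 2 * ((1 - 'i * sqrtC 3) / 2) =
    (1 - ('i * 'i) * (sqrtC 3 * sqrtC 3)) / 4 :> algC by field.
by rewrite i2 s3; apply/eqP; field.
Qed.

Definition degree_le1 {T : Type} (e : rel T) := forall v a b, e v a -> e v b -> a = b.

Section Components.
Variables (n : nat) (e : rel 'I_n).
Hypothesis e_sym : symmetric e.

Lemma component_subset (S : {set 'I_n}) u :
  (forall x y, e x y -> x \in S -> y \in S) -> u \in S -> component e u \subset S.
Proof.
move=> e_S u_S; have S_closed : closed e (mem S).
  by move=> x y xy; apply/idP/idP; apply: e_S; rewrite // e_sym.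
by apply/subsetP => x; rewrite inE => /(closed_connect S_closed) <-.
Qed.

Lemma component_isolated u : (forall w, ~~ e u w) -> component e u = [set u].
Proof.
move=> u_isolated; apply/eqP; rewrite eqEsubset sub1set inE connect0 andbT.
apply: component_subset; last by rewrite set11.
by move=> x y xy /set1P x_u; rewrite x_u (negbTE (u_isolated y)) in xy.
Qed.

Lemma component_pair u w : degree_le1 e -> e u w -> component e u = [set u; w].
Proof.
move=> e_le1 uw; apply/eqP; rewrite eqEsubset; apply/andP; split.
  apply: component_subset; last by rewrite set21.
  move=> x y xy /set2P[] x_def; rewrite x_def in xy.
    by rewrite (e_le1 _ _ _ xy uw) set22.
  by rewrite (e_le1 _ _ _ xy (etrans (e_sym w u) uw)) set21.
by apply/subsetP => x /set2P[] ->; rewrite inE ?connect0 ?connect1.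
Qed.

End Components.

Lemma degree_le1_of_components_trivial n (adj arc : rel 'I_n) :
  irreflexive adj -> components_trivial adj arc -> degree_le1 adj.
Proof.
move=> adj_irr comp_triv v a b v_a v_b; apply/eqP; apply: contraT => a_neq_b.
have v_neq x : adj v x -> v != x by apply: contraTneq => <-; rewrite adj_irr.
have in_comp x : adj v x -> x \in component adj v by rewrite inE; apply: connect1.
have v_in : v \in component adj v by rewrite inE connect0.
have [comp1 | [x [y [comp_xy _]]]] := comp_triv v.
  have : (1 < #|component adj v|)%N.
    by apply/card_gt1P; exists v, a; rewrite v_in in_comp ?v_neq.
  by rewrite comp1.
move: v_in (in_comp a v_a) (in_comp b v_b) (v_neq a v_a) (v_neq b v_b) a_neq_b.
by rewrite comp_xy !inE => /orP[]/eqP-> /orP[]/eqP-> /orP[]/eqP->; rewrite ?eqxx.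
Qed.

Lemma components_trivial_of_degree_le1 n (adj arc : rel 'I_n) :
  symmetric adj -> degree_le1 adj -> components_trivial adj arc.
Proof.
move=> adj_sym adj_le1 u; have [w u_w|u_isolated] := pickP (adj u); last first.
  by left; rewrite component_isolated ?cards1 // => w; rewrite u_isolated.
right; have comp_uw := component_pair adj_sym adj_le1 u_w.
have [u_to_w|u_not_to_w] := boolP (arc u w); first by exists u, w; split; [|right].
have [w_to_u|w_not_to_u] := boolP (arc w u).
  by exists w, u; rewrite setUC; split; [|right].
by exists u, w; split; [|left; rewrite /undirected_edge u_w u_not_to_w w_not_to_u].
Qed.

Section MixedGraph.
Variables (n : nat) (adj arc : rel 'I_n).
Hypotheses (adj_sym : symmetric adj) (arc_adj : forall u v, arc u v -> adj u v).
Hypothesis arc_asym : forall u v, arc u v -> ~~ arc v u.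
Local Notation N := (mixed_matrix adj arc).

Lemma norm_mixed_matrix u v : `|N u v| = (adj u v)%:R.
Proof.
rewrite mxE; case: ifP => [/arc_adj->|_]; first by rewrite norm_omega.
case: ifP => [/arc_adj|_]; first by rewrite norm_conjC norm_omega adj_sym => ->.
by case: (adj u v); rewrite ?normr1 ?normr0.
Qed.

Lemma mixed_matrix_trC : N^t* = N.
Proof.
apply/matrixP => u v; rewrite !mxE.
case: ifP => [vu | _]; first by rewrite (negbTE (arc_asym vu)).
case: ifP => _; first by rewrite conjCK.
by rewrite adj_sym; case: (adj u v); rewrite ?rmorph1 ?rmorph0.
Qed.

Lemma mixed_matrix_normal : N \is normalmx.
Proof. by apply/normalmxP; rewrite mixed_matrix_trC. Qed.

Lemma spectral_radius_mixed_le1 : degree_le1 adj -> spectral_radius N <= 1.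
Proof.
move=> adj_le1; apply: spectral_radius_le => // z.
apply: (@norm_eigenvalue_le_row_sums algC) => k.
under eq_bigr do rewrite norm_mixed_matrix.
have [i0 k_i0|k_isolated] := pickP (adj k); last by rewrite big1 // => i _; rewrite k_isolated.
rewrite (bigD1 i0) //= k_i0 big1 ?addr0 // => i i_neq0.
by case k_i: (adj k i) => //; rewrite (adj_le1 _ _ _ k_i k_i0) eqxx in i_neq0.
Qed.

Lemma sqrt2_le_spectral_radius_mixed v a b :
  adj v a -> adj v b -> a != b -> sqrtC 2 <= spectral_radius N.
Proof.
move=> v_a v_b a_neq_b; have r_ge0 := spectral_radius_ge0 N.
set r := spectral_radius N in r_ge0 *.
have col_le : \sum_i `|N i v| ^+ 2 <= r ^+ 2.
  apply: normalmx_col_norm2_le mixed_matrix_normal _ => z.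
  exact: norm_eigenvalue_le_spectral_radius.
have col_ge : 2 <= \sum_i `|N i v| ^+ 2.
  rewrite (bigD1 a) //= (bigD1 b) 1?eq_sym //= !norm_mixed_matrix.
  rewrite !(adj_sym _ v) v_a v_b expr1n addrA lerDl.
  by apply: sumr_ge0 => i _; apply: exprn_ge0.
rewrite -(sqrCK r_ge0) ler_sqrtC ?nnegrE ?exprn_ge0 //.
exact: le_trans col_ge col_le.
Qed.

End MixedGraph.

Theorem theorem6p4 (n : nat) (adj arc : rel 'I_n) :
  mixed_graph adj arc ->
  (spectral_radius (mixed_matrix adj arc) < sqrtC 2 <->
     spectral_radius (mixed_matrix adj arc) <= 1) /\
  (spectral_radius (mixed_matrix adj arc) <= 1 <->
     components_trivial adj arc).
Proof.
case=> adj_sym adj_irr arc_adj arc_asym; set r := spectral_radius _.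
have one_lt_sqrt2 : (1 : algC) < sqrtC 2.
  by rewrite -{1}(sqrtC1 algC) ltr_sqrtC ?nnegrE ?ler01 ?ler0n ?ltr1n.
have r_le1_lt_sqrt2 : r <= 1 -> r < sqrtC 2.
  by move=> r_le1; apply: le_lt_trans r_le1 one_lt_sqrt2.
have r_lt_sqrt2_degree : r < sqrtC 2 -> degree_le1 adj.
  move=> r_lt v a b v_a v_b; apply: contraTeq r_lt => a_neq_b.
  by rewrite le_gtF // (sqrt2_le_spectral_radius_mixed adj_sym arc_adj arc_asym v_a v_b).
have degree_r_le1 : degree_le1 adj -> r <= 1.
  exact: spectral_radius_mixed_le1 adj_sym arc_adj.
have trivial_degree : components_trivial adj arc <-> degree_le1 adj.
  split; [exact: degree_le1_of_components_trivial | exact: components_trivial_of_degree_le1].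
tauto.
Qed.
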